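(* Let $R$ be a ring with identity and let $a,b,c,y\in R$. Then: (i) If $c$ is regular (i.e. $c=czc$ for some $z\in R$), then $y$ is a left $(b,c)$-inverse of $a$ if and only if $y$ is a right annihilator $(b,c)$-inverse of $a$. (ii) If $b$ is regular (i.e. $b=bzb$ for some $z\in R$), then $y$ is a right $(b,c)$-inverse of $a$ if and only if $y$ is a left annihilator $(b,c)$-inverse of $a$.
   Context: For $x\in R$: $xR=\{xr:r\in R\}$, $Rx=\{rx:r\in R\}$, $x^\circ=\{r\in R: xr=0\}$, ${}^\circ x=\{r\in R: rx=0\}$. An element $y\in R$ is a left $(b,c)$-inverse of $a$ if $Ry\subseteq Rc$ and $yab=b$; a right $(b,c)$-inverse of $a$ if $yR\subseteq bR$ and $cay=c$; a right annihilator $(b,c)$-inverse of $a$ if $c^\circ\subseteq y^\circ$ and $yab=b$; a left annihilator $(b,c)$-inverse of $a$ if ${}^\circ b\subseteq {}^\circ y$ and $cay=c$. *)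

From mathcomp Require Import all_boot all_algebra.
Set Implicit Arguments. Unset Strict Implicit. Unset Printing Implicit Defensive.
Import GRing.Theory.
Local Open Scope ring_scope.

Definition lideal_sub (R : pzRingType) (y c : R) : Prop :=
  forall r : R, exists s : R, r * y = s * c.
Definition rideal_sub (R : pzRingType) (y b : R) : Prop :=
  forall r : R, exists s : R, y * r = b * s.
Definition rann_sub (R : pzRingType) (c y : R) : Prop :=
  forall r : R, c * r = 0 -> y * r = 0.
Definition lann_sub (R : pzRingType) (b y : R) : Prop :=
  forall r : R, r * b = 0 -> r * y = 0.

Definition left_bc_inverse (R : pzRingType) (a b c y : R) : Prop :=
  lideal_sub y c /\ y * a * b = b.
Definition right_bc_inverse (R : pzRingType) (a b c y : R) : Prop :=
  rideal_sub y b /\ c * a * y = c.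
Definition right_ann_bc_inverse (R : pzRingType) (a b c y : R) : Prop :=
  rann_sub c y /\ y * a * b = b.
Definition left_ann_bc_inverse (R : pzRingType) (a b c y : R) : Prop :=
  lann_sub b y /\ c * a * y = c.

Definition regular (R : pzRingType) (x : R) : Prop := exists z : R, x = x * z * x.

From mathcomp Require Import all_boot all_algebra.
Local Open Scope ring_scope.
Import GRing.Theory.

(* When [c = c z c], the element [1 - z c] generates the right annihilator of
   [c], so [c° ⊆ y°] forces [y = y z c ∈ R c]; dually [b = b z b] makes
   [1 - b z] generate [°b], so [°b ⊆ °y] forces [y = b z y ∈ b R]. The converse
   inclusions hold in any ring. *)

Section Ideals.

Variable R : pzRingType.
Implicit Types b c y z : R.

Lemma lideal_subP y c : lideal_sub y c <-> exists s, y = s * c.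
Proof.
split=> [sub_yc | [s ->] r]; last by exists (r * s); rewrite mulrA.
by have [s] := sub_yc 1; rewrite mul1r; exists s.
Qed.

Lemma rideal_subP y b : rideal_sub y b <-> exists s, y = b * s.
Proof.
split=> [sub_yb | [s ->] r]; last by exists (s * r); rewrite mulrA.
by have [s] := sub_yb 1; rewrite mulr1; exists s.
Qed.

Lemma lideal_sub_rann_sub y c : lideal_sub y c -> rann_sub c y.
Proof. by move=> /lideal_subP[s ->] r cr0; rewrite -mulrA cr0 mulr0. Qed.

Lemma rideal_sub_lann_sub y b : rideal_sub y b -> lann_sub b y.
Proof. by move=> /rideal_subP[s ->] r rb0; rewrite mulrA rb0 mul0r. Qed.

Lemma rann_sub_lideal_sub y c z :
  c = c * z * c -> rann_sub c y -> lideal_sub y c.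
Proof.
move=> czc sub_cy; apply/lideal_subP; exists (y * z).
have c_ann : c * (1 - z * c) = 0 by rewrite mulrBr mulr1 mulrA -czc subrr.
by apply/eqP; rewrite -mulrA -subr_eq0 -[X in X - _]mulr1 -mulrBr sub_cy.
Qed.

Lemma lann_sub_rideal_sub y b z :
  b = b * z * b -> lann_sub b y -> rideal_sub y b.
Proof.
move=> bzb sub_by; apply/rideal_subP; exists (z * y).
have b_ann : (1 - b * z) * b = 0 by rewrite mulrBl mul1r -bzb subrr.
by apply/eqP; rewrite mulrA -subr_eq0 -[X in X - _]mul1r -mulrBl sub_by.
Qed.

End Ideals.

Theorem proposition2p5 (R : pzRingType) (a b c y : R) :
  (regular c ->
     (left_bc_inverse a b c y <-> right_ann_bc_inverse a b c y)) /\
  (regular b ->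
     (right_bc_inverse a b c y <-> left_ann_bc_inverse a b c y)).
Proof.
split=> [[z czc] | [z bzb]]; split=> -[sub eq]; split=> //.
- exact: lideal_sub_rann_sub.
- exact: rann_sub_lideal_sub czc sub.
- exact: rideal_sub_lann_sub.
- exact: lann_sub_rideal_sub bzb sub.
Qed.
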